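(* The functor $G:\mathbf{cMet}_1\to{\rm PER}(\mathbf U)$, $G(X,d)=(X,d)$, $G(f)=[(x,y)\mapsto d(f(x),y)]$, preserves finite products.
   Context: $\mathbf{cMet}_1$: complete metric spaces with all distances $\le 1$ and uniformly continuous maps; its binary product is the set-theoretic product with the max-metric, its terminal object a one-point space. For functions $\alpha,\beta:Z\to[0,1]$ write $\alpha\sqsubseteq\beta$ if for every $\varepsilon>0$ there exists $\delta>0$ such that for all $z$, $\alpha(z)\le\delta$ implies $\beta(z)\le\varepsilon$. The category ${\rm PER}(\mathbf U)$, concretely: objects are pairs $(X,R)$ with $X$ a set and $R:X\times X\to[0,1]$ such that $R(x,y)\sqsubseteq R(y,x)$ (as functions of $(x,y)$) and $\max(R(x,y),R(y,z))\sqsubseteq R(x,z)$ (as functions of $(x,y,z)$). A functional relation $(X,R)\to(Y,S)$ is $F:X\times Y\to[0,1]$ with $F(x,y)\sqsubseteq\max(R(x,x),S(y,y))$, $\max(F(x,y),R(x,x'),S(y,y'))\sqsubseteq F(x',y')$, $\max(F(x,y),F(x,y'))\sqsubseteq S(y,y')$, and $R(x,x)\sqsubseteq\inf_{y\in Y}F(x,y)$ (each as functions of the displayed variables). Morphisms are classes $[F]$ with $F\sim F'$ iff $F\sqsubseteq F'$; composition of $[F]$ and $[H]$ is $[(x,z)\mapsto\inf_y\max(F(x,y),H(y,z))]$. *)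

From HB Require Import structures.
From mathcomp Require Import all_boot all_order all_algebra.
From mathcomp Require Import all_classical all_reals.
Set Implicit Arguments. Unset Strict Implicit. Unset Printing Implicit Defensive.
Import Order.TTheory GRing.Theory Num.Theory.
Local Open Scope classical_set_scope.
Local Open Scope ring_scope.

Section Defs.
Variable R : realType.

Definition is_metric1 (X : Type) (d : X -> X -> R) : Prop :=
  (forall x y, 0 <= d x y <= 1) /\
  (forall x y, d x y = 0 <-> x = y) /\
  (forall x y, d x y = d y x) /\
  (forall x y z, d x z <= d x y + d y z).

Definition cauchy_seq (X : Type) (d : X -> X -> R) (u : nat -> X) : Prop :=
  forall e : R, 0 < e -> exists N : nat, forall m n : nat,
    (N <= m)%N -> (N <= n)%N -> d (u m) (u n) < e.

Definition converges_to (X : Type) (d : X -> X -> R) (u : nat -> X) (x : X) : Prop :=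
  forall e : R, 0 < e -> exists N : nat, forall n : nat, (N <= n)%N -> d (u n) x < e.

Definition complete_metric (X : Type) (d : X -> X -> R) : Prop :=
  forall u : nat -> X, cauchy_seq d u -> exists x, converges_to d u x.

Definition cMet1 (X : Type) (d : X -> X -> R) : Prop :=
  is_metric1 d /\ complete_metric d.

Definition prod_metric (X Y : Type) (dX : X -> X -> R) (dY : Y -> Y -> R)
  (p q : X * Y) : R := Num.max (dX p.1 q.1) (dY p.2 q.2).

Definition unit_metric (_ _ : unit) : R := 0.

Definition sqle (Z : Type) (alpha beta : Z -> R) : Prop :=
  forall e : R, 0 < e -> exists2 delta : R, 0 < delta &
    forall z, alpha z <= delta -> beta z <= e.

(* infimum in the complete lattice [0,1] (inf of the empty family is 1) *)
Definition inf01 (Y : Type) (f : Y -> R) : R := inf (range f `|` [set 1]).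

Definition valued01 (X Y : Type) (F : X -> Y -> R) : Prop :=
  forall x y, 0 <= F x y <= 1.

Definition is_per (X : Type) (Rx : X -> X -> R) : Prop :=
  valued01 Rx /\
  sqle (fun p : X * X => Rx p.1 p.2) (fun p : X * X => Rx p.2 p.1) /\
  sqle (fun t : X * X * X => Num.max (Rx t.1.1 t.1.2) (Rx t.1.2 t.2))
       (fun t : X * X * X => Rx t.1.1 t.2).

Definition is_funrel (X Y : Type) (Rx : X -> X -> R) (S : Y -> Y -> R)
    (F : X -> Y -> R) : Prop :=
  valued01 F /\
  sqle (fun p : X * Y => F p.1 p.2)
       (fun p : X * Y => Num.max (Rx p.1 p.1) (S p.2 p.2)) /\
  sqle (fun t : X * Y * X * Y =>
          Num.max (F t.1.1.1 t.1.1.2) (Num.max (Rx t.1.1.1 t.1.2) (S t.1.1.2 t.2)))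
       (fun t : X * Y * X * Y => F t.1.2 t.2) /\
  sqle (fun t : X * Y * Y => Num.max (F t.1.1 t.1.2) (F t.1.1 t.2))
       (fun t : X * Y * Y => S t.1.2 t.2) /\
  sqle (fun x : X => Rx x x) (fun x : X => inf01 (fun y : Y => F x y)).

(* equality of morphisms: F ~ F' iff F ⊑ F' *)
Definition frel_equiv (X Y : Type) (F F' : X -> Y -> R) : Prop :=
  sqle (fun p : X * Y => F p.1 p.2) (fun p : X * Y => F' p.1 p.2).

Definition frel_comp (X Y Z : Type) (F : X -> Y -> R) (H : Y -> Z -> R)
    (x : X) (z : Z) : R :=
  inf01 (fun y : Y => Num.max (F x y) (H y z)).

Definition G_map (X Y : Type) (dY : Y -> Y -> R) (f : X -> Y) (x : X) (y : Y) : R :=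
  dY (f x) y.

Definition is_product_PER (P X Y : Type) (Rp : P -> P -> R)
    (Rx : X -> X -> R) (Ry : Y -> Y -> R)
    (p1 : P -> X -> R) (p2 : P -> Y -> R) : Prop :=
  is_per Rp /\ is_funrel Rp Rx p1 /\ is_funrel Rp Ry p2 /\
  forall (Z : Type) (Rz : Z -> Z -> R), is_per Rz ->
  forall (F1 : Z -> X -> R) (F2 : Z -> Y -> R),
    is_funrel Rz Rx F1 -> is_funrel Rz Ry F2 ->
    (exists H : Z -> P -> R, is_funrel Rz Rp H /\
        frel_equiv (frel_comp H p1) F1 /\ frel_equiv (frel_comp H p2) F2) /\
    (forall H H' : Z -> P -> R, is_funrel Rz Rp H -> is_funrel Rz Rp H' ->
        frel_equiv (frel_comp H p1) F1 -> frel_equiv (frel_comp H p2) F2 ->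
        frel_equiv (frel_comp H' p1) F1 -> frel_equiv (frel_comp H' p2) F2 ->
        frel_equiv H H').

Definition is_terminal_PER (T : Type) (Rt : T -> T -> R) : Prop :=
  is_per Rt /\
  forall (Z : Type) (Rz : Z -> Z -> R), is_per Rz ->
    (exists F : Z -> T -> R, is_funrel Rz Rt F) /\
    (forall F F' : Z -> T -> R, is_funrel Rz Rt F -> is_funrel Rz Rt F' ->
       frel_equiv F F').

End Defs.

From mathcomp Require Import all_boot all_order all_algebra.
From mathcomp Require Import all_classical all_reals.
From mathcomp Require Import lra.
Set Implicit Arguments. Unset Strict Implicit. Unset Printing Implicit Defensive.
Import Order.TTheory GRing.Theory Num.Theory.
Local Open Scope classical_set_scope.
Local Open Scope ring_scope.

(* All uniform-continuity arguments are phrased through the approximation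
   preorder [sqle] (written ⊑ below), which is closed under transitivity,
   binary max on the right, precomposition and pointwise domination.  The one
   non-equational ingredient is an "approximate witness" principle
   [approx_total a b]: whenever [a x] is small there is a [y] with [b x y]
   small.  Infima in [0,1] and the totality clause of a functional relation
   both provide such witnesses, and [sqle_of_total] turns them into ⊑-facts. *)

Section Approximation.
Variable R : realType.

Lemma sqle_scale (Z : Type) (a b : Z -> R) (k : R) : 0 < k ->
  (forall z, b z <= k * a z) -> sqle a b.
Proof.
move=> k0 hb e e0; exists (e / k); first by rewrite divr_gt0.
by move=> z az; apply: (le_trans (hb z)); rewrite -ler_pdivlMl // mulrC.
Qed.

Lemma sqle_pointwise (Z : Type) (a b : Z -> R) : (forall z, b z <= a z) -> sqle a b.
Proof. by move=> hb; apply: (@sqle_scale _ _ _ 1) => // z; rewrite mul1r. Qed.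

Lemma sqle_trans (Z : Type) (a b c : Z -> R) : sqle a b -> sqle b c -> sqle a c.
Proof.
move=> ab bc e e0; have [d d0 hd] := bc e e0; have [d' d'0 hd'] := ab d d0.
by exists d' => // z /hd' /hd.
Qed.

Lemma sqle_max (Z : Type) (a b c : Z -> R) :
  sqle a b -> sqle a c -> sqle a (fun z => Num.max (b z) (c z)).
Proof.
move=> ab ac e e0; have [d d0 hd] := ab e e0; have [d' d'0 hd'] := ac e e0.
exists (Num.min d d'); first by rewrite lt_min d0.
by move=> z; rewrite le_min => /andP[/hd h1 /hd' h2]; rewrite ge_max h1 h2.
Qed.

Lemma sqle_precomp (Z W : Type) (g : W -> Z) (a b : Z -> R) :
  sqle a b -> sqle (fun w => a (g w)) (fun w => b (g w)).
Proof. by move=> ab e e0; have [d d0 hd] := ab e e0; exists d => // w /hd. Qed.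

Definition approx_total (A B : Type) (a : A -> R) (b : A -> B -> R) : Prop :=
  forall e, 0 < e -> exists2 d, 0 < d & forall x, a x <= d -> exists y, b x y <= e.

Lemma total_sqle (A B : Type) (a a' : A -> R) (b : A -> B -> R) :
  sqle a a' -> approx_total a' b -> approx_total a b.
Proof.
move=> aa' tb e e0; have [d d0 hd] := tb e e0; have [d' d'0 hd'] := aa' d d0.
by exists d' => // x /hd' /hd.
Qed.

Lemma total_precomp (A C B : Type) (g : C -> A) (a : A -> R) (b : A -> B -> R) :
  approx_total a b -> approx_total (fun x => a (g x)) (fun x => b (g x)).
Proof. by move=> tb e e0; have [d d0 hd] := tb e e0; exists d => // x /hd. Qed.

Lemma total_pair (A B1 B2 : Type) (a : A -> R) (b1 : A -> B1 -> R)
    (b2 : A -> B2 -> R) :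
  approx_total a b1 -> approx_total a b2 ->
  approx_total a (fun x (y : B1 * B2) => Num.max (b1 x y.1) (b2 x y.2)).
Proof.
move=> t1 t2 e e0; have [d1 d10 h1] := t1 e e0; have [d2 d20 h2] := t2 e e0.
exists (Num.min d1 d2); first by rewrite lt_min d10.
move=> x; rewrite le_min => /andP[/h1[y1 hy1] /h2[y2 hy2]].
by exists (y1, y2); rewrite ge_max hy1 hy2.
Qed.

Lemma sqle_of_total (A B : Type) (a : A -> R) (b : A -> B -> R) (c : A -> R) :
  approx_total a b ->
  sqle (fun t : A * B => Num.max (a t.1) (b t.1 t.2)) (fun t => c t.1) ->
  sqle a c.
Proof.
move=> tb abc e e0; have [d d0 hd] := abc e e0; have [d' d'0 hd'] := tb d d0.
exists (Num.min d d'); first by rewrite lt_min d0.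
move=> x; rewrite le_min => /andP[axd /hd'[y bxy]].
by apply: (hd (x, y)); rewrite ge_max axd.
Qed.

Lemma inf01_le (Y : Type) (f : Y -> R) (y : Y) :
  (forall y, 0 <= f y) -> inf01 f <= f y.
Proof.
move=> f0; apply: ge_inf; last by left; exists y.
by exists 0 => _ [[y' _ <-]|->].
Qed.

Lemma inf01_lt (Y : Type) (f : Y -> R) (e : R) : inf01 f < e -> e <= 1 ->
  exists y, f y < e.
Proof.
move=> /inf_lt[]; first by exists 1; right.
move=> _ [[y _ <-]|->] fe e1; first by exists y.
by have := lt_le_trans fe e1; rewrite ltxx.
Qed.

Lemma inf01_total (A B : Type) (b : A -> B -> R) :
  approx_total (fun x => inf01 (b x)) b.
Proof.
move=> e e0; pose m := Num.min e 1.
have m0 : 0 < m by rewrite lt_min e0 ltr01.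
have m1 : m <= 1 by rewrite ge_min lexx orbT.
exists (m / 2); first by rewrite divr_gt0.
move=> x infm; have [|y bxy] := @inf01_lt _ (b x) m _ m1; first lra.
by exists y; apply: ltW (lt_le_trans bxy _); rewrite ge_min lexx.
Qed.

Lemma sqle_inf01 (A B : Type) (a : A -> R) (b : A -> B -> R) :
  approx_total a b -> (forall x y, 0 <= b x y) -> sqle a (fun x => inf01 (b x)).
Proof.
move=> tb b0 e e0; have [d d0 hd] := tb e e0; exists d => // x /hd[y bxy].
exact: le_trans (inf01_le _ (b0 x)) bxy.
Qed.

End Approximation.

Section PERFacts.
Variable R : realType.

(* In a PER, R(x,y) ⊑ R(y,y): symmetrize, then use transitivity. *)
Lemma per_diag_r (X : Type) (Rx : X -> X -> R) : is_per Rx ->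
  sqle (fun p : X * X => Rx p.1 p.2) (fun p : X * X => Rx p.2 p.2).
Proof.
move=> [_ [sym tr]].
apply: (sqle_trans _ (sqle_precomp (fun p : X * X => (p.2, p.1, p.2)) tr)) => /=.
by apply: sqle_max => //; apply: sqle_pointwise.
Qed.

Lemma funrel_dom (X Y : Type) (Rx : X -> X -> R) (S : Y -> Y -> R)
    (F : X -> Y -> R) : is_funrel Rx S F ->
  sqle (fun p : X * Y => F p.1 p.2) (fun p : X * Y => Rx p.1 p.1).
Proof.
move=> [_ [strict _]]; apply: (sqle_trans strict).
by apply: sqle_pointwise => p; rewrite le_max lexx.
Qed.

Lemma funrel_transport (X Y : Type) (Rx : X -> X -> R) (S : Y -> Y -> R)
    (F : X -> Y -> R) : is_funrel Rx S F ->
  sqle (fun t : X * Y * Y => Num.max (F t.1.1 t.1.2) (S t.1.2 t.2))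
       (fun t : X * Y * Y => F t.1.1 t.2).
Proof.
move=> fr; have [_ [_ [ext _]]] := fr.
apply: (sqle_trans _ (sqle_precomp
  (fun t : X * Y * Y => (t.1.1, t.1.2, t.1.1, t.2)) ext)) => /=.
apply: sqle_max; first by apply: sqle_pointwise => t; rewrite le_max lexx.
apply: sqle_max; last by apply: sqle_pointwise => t; rewrite le_max lexx orbT.
apply: (sqle_trans _ (sqle_precomp (fun t : X * Y * Y => t.1) (funrel_dom fr))).
by apply: sqle_pointwise => t; rewrite le_max lexx.
Qed.

Lemma funrel_total (X Y : Type) (Rx : X -> X -> R) (S : Y -> Y -> R)
    (F : X -> Y -> R) : is_funrel Rx S F -> approx_total (fun x => Rx x x) F.
Proof. by move=> [_ [_ [_ [_ tot]]]]; apply: total_sqle tot (inf01_total F). Qed.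

End PERFacts.

Section MetricAxioms.
Variable R : realType.
Variables (X : Type) (d : X -> X -> R).
Hypothesis md : is_metric1 d.

Lemma met0 x y : 0 <= d x y. Proof. by case/andP: (md.1 x y). Qed.
Lemma met1 x y : d x y <= 1. Proof. by case/andP: (md.1 x y). Qed.
Lemma metxx x : d x x = 0. Proof. by apply/md.2.1. Qed.
Lemma meteq x y : d x y = 0 -> x = y. Proof. by move/md.2.1. Qed.
Lemma metC x y : d x y = d y x. Proof. exact: md.2.2.1. Qed.
Lemma metT x y z : d x z <= d x y + d y z. Proof. exact: md.2.2.2. Qed.

End MetricAxioms.

Section Metrics.
Variable R : realType.
Variables (X : Type) (d : X -> X -> R).
Hypothesis md : is_metric1 d.

(* A [0,1]-metric is a PER (transitivity up to the factor 2). *)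
Lemma metric_per : is_per d.
Proof.
split; first by move=> x y; rewrite (met0 md) (met1 md).
split; first by apply: sqle_pointwise => p; rewrite (metC md).
apply: (@sqle_scale _ _ _ _ 2) => // t; apply: (le_trans (metT md _ t.1.2 _)).
by rewrite mulr2n mulrDl mul1r lerD // le_max lexx ?orbT.
Qed.

Lemma comp_graph_le (Z P : Type) (G : Z -> P -> R) (f : P -> X) z p :
  valued01 G -> frel_comp G (G_map d f) z (f p) <= G z p.
Proof.
move=> vG; rewrite /frel_comp /G_map.
apply: le_trans (inf01_le p _) _; last by rewrite (metxx md) ge_max lexx; case/andP: (vG z p).
by move=> q; rewrite le_max (met0 md) orbT.
Qed.

Lemma comp_graph_factor (Z P : Type) (G : Z -> P -> R) (f : P -> X)
    (F : Z -> X -> R) :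
  valued01 G -> frel_equiv (frel_comp G (G_map d f)) F ->
  sqle (fun t : Z * P => G t.1 t.2) (fun t : Z * P => F t.1 (f t.2)).
Proof.
move=> vG eqv; apply: sqle_trans (sqle_precomp (fun t : Z * P => (t.1, f t.2)) eqv).
by apply: sqle_pointwise => t; apply: comp_graph_le.
Qed.

Lemma comp_graph_equiv (Z P : Type) (Rz : Z -> Z -> R) (F : Z -> X -> R)
    (G : Z -> P -> R) (f : P -> X) :
  is_funrel Rz d F -> (forall z p, F z (f p) <= G z p) ->
  frel_equiv (frel_comp G (G_map d f)) F.
Proof.
move=> fr FG; rewrite /frel_equiv /frel_comp /G_map.
apply: (sqle_of_total (inf01_total _)) => /=.
apply: sqle_trans (sqle_precomp
  (fun t : Z * X * P => (t.1.1, f t.2, t.1.2)) (funrel_transport fr)).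
apply: sqle_pointwise => t /=; rewrite ge_max !le_max lexx !orbT andbT.
by rewrite (FG _ _) orbT.
Qed.

(* A nonexpansive map [f : P -> X] induces the functional relation G(f); the
   extensionality clause is d(f p', x') <= dP(p, p') + d(f p, x) + d(x, x'). *)
Lemma nonexpansive_funrel (P : Type) (dP : P -> P -> R) (f : P -> X) :
  is_metric1 dP -> (forall p q, d (f p) (f q) <= dP p q) ->
  is_funrel dP d (G_map d f).
Proof.
move=> mP nf; rewrite /G_map; split; first by move=> p x; rewrite (met0 md) (met1 md).
split; first by apply: sqle_pointwise => p /=; rewrite (metxx md) (metxx mP) maxxx (met0 md).
split.
  apply: (@sqle_scale _ _ _ _ 3) => // t /=.
  apply: (le_trans (metT md _ (f t.1.1.1) _)).
  apply: (le_trans (lerD (lexx _) (metT md _ t.1.1.2 _))).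
  rewrite -(natr1 2) mulrDl mul1r mulr2n mulrDl mul1r -addrA.
  apply: lerD; last apply: lerD.
  - by apply: (le_trans (nf _ _)); rewrite (metC mP) !le_max lexx ?orbT.
  - by rewrite !le_max lexx ?orbT.
  - by rewrite !le_max lexx ?orbT.
split.
  apply: (@sqle_scale _ _ _ _ 2) => // t /=; apply: (le_trans (metT md _ (f t.1.1) _)).
  by rewrite mulr2n mulrDl mul1r (metC md) lerD // le_max lexx ?orbT.
apply: sqle_pointwise => p; apply: le_trans (inf01_le (f p) (met0 md _)) _.
by rewrite (metxx md) (metxx mP).
Qed.

End Metrics.

Section ProductMetric.
Variable R : realType.
Variables (X Y : Type) (dX : X -> X -> R) (dY : Y -> Y -> R).
Hypotheses (mX : is_metric1 dX) (mY : is_metric1 dY).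

Lemma prod_metric_is_metric : is_metric1 (prod_metric dX dY).
Proof.
rewrite /prod_metric; split.
  by move=> p q; rewrite le_max ge_max (met0 mX) (met1 mX) (met1 mY).
split.
  move=> [x y] [x' y'] /=; split; last by case=> -> ->; rewrite (metxx mX) (metxx mY) maxxx.
  move=> dxy.
  have dx0 : dX x x' = 0.
    by apply/eqP; rewrite eq_le (met0 mX) andbT -dxy le_max lexx.
  have dy0 : dY y y' = 0.
    by apply/eqP; rewrite eq_le (met0 mY) andbT -dxy le_max lexx orbT.
  by rewrite (meteq mX dx0) (meteq mY dy0).
split; first by move=> p q; rewrite (metC mX) (metC mY).
move=> p q r; rewrite ge_max; apply/andP; split.
  by apply: (le_trans (metT mX _ q.1 _)); apply: lerD; rewrite le_max lexx.
by apply: (le_trans (metT mY _ q.2 _)); apply: lerD; rewrite le_max lexx orbT.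
Qed.

Lemma fst_funrel : is_funrel (prod_metric dX dY) dX (G_map dX (@fst X Y)).
Proof.
apply: nonexpansive_funrel prod_metric_is_metric _ => //.
by move=> p q; rewrite /prod_metric le_max lexx.
Qed.

Lemma snd_funrel : is_funrel (prod_metric dX dY) dY (G_map dY (@snd X Y)).
Proof.
apply: nonexpansive_funrel prod_metric_is_metric _ => //.
by move=> p q; rewrite /prod_metric le_max lexx orbT.
Qed.

Variables (Z : Type) (Rz : Z -> Z -> R) (F1 : Z -> X -> R) (F2 : Z -> Y -> R).
Hypotheses (fr1 : is_funrel Rz dX F1) (fr2 : is_funrel Rz dY F2).

Definition pairing (z : Z) (p : X * Y) : R := Num.max (F1 z p.1) (F2 z p.2).

Lemma pairing_funrel : is_funrel Rz (prod_metric dX dY) pairing.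
Proof.
have [v1 [strict1 [ext1 [fun1 _]]]] := fr1; have [v2 [_ [ext2 [fun2 _]]]] := fr2.
rewrite /pairing; split.
  move=> z p; have /andP[l1 u1] := v1 z p.1; have /andP[l2 u2] := v2 z p.2.
  by rewrite le_max ge_max l1 u1 u2.
split.
  apply: (sqle_trans (b := fun p : Z * (X * Y) => F1 p.1 p.2.1)).
    by apply: sqle_pointwise => p; rewrite le_max lexx.
  apply: sqle_trans (sqle_precomp (fun p : Z * (X * Y) => (p.1, p.2.1)) strict1) _.
  by apply: sqle_pointwise => p; rewrite /prod_metric /= (metxx mX) (metxx mY) maxxx.
split.
  apply: sqle_max.
    apply: sqle_trans (sqle_precomp (fun t : Z * (X * Y) * Z * (X * Y) =>
      (t.1.1.1, t.1.1.2.1, t.1.2, t.2.1)) ext1).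
    by apply: sqle_pointwise => t; rewrite /prod_metric /= !ge_max !le_max !lexx !orbT.
  apply: sqle_trans (sqle_precomp (fun t : Z * (X * Y) * Z * (X * Y) =>
    (t.1.1.1, t.1.1.2.2, t.1.2, t.2.2)) ext2).
  by apply: sqle_pointwise => t; rewrite /prod_metric /= !ge_max !le_max !lexx !orbT.
split.
  rewrite /prod_metric; apply: sqle_max.
    apply: sqle_trans (sqle_precomp (fun t : Z * (X * Y) * (X * Y) =>
      (t.1.1, t.1.2.1, t.2.1)) fun1).
    by apply: sqle_pointwise => t; rewrite /= !ge_max !le_max !lexx ?orbT.
  apply: sqle_trans (sqle_precomp (fun t : Z * (X * Y) * (X * Y) =>
    (t.1.1, t.1.2.2, t.2.2)) fun2).
  by apply: sqle_pointwise => t; rewrite /= !ge_max !le_max !lexx !orbT.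
apply: sqle_inf01 (total_pair (funrel_total fr1) (funrel_total fr2)) _.
by move=> z p; rewrite le_max; case/andP: (v1 z p.1) => ->.
Qed.

Lemma pairing_fst : frel_equiv (frel_comp pairing (G_map dX (@fst X Y))) F1.
Proof. by apply: comp_graph_equiv fr1 _ => z p; rewrite le_max lexx. Qed.

Lemma pairing_snd : frel_equiv (frel_comp pairing (G_map dY (@snd X Y))) F2.
Proof. by apply: comp_graph_equiv fr2 _ => z p; rewrite le_max lexx orbT. Qed.

Lemma factor_dist (H H' : Z -> X * Y -> R) :
  valued01 H -> valued01 H' ->
  frel_equiv (frel_comp H (G_map dX (@fst X Y))) F1 ->
  frel_equiv (frel_comp H (G_map dY (@snd X Y))) F2 ->
  frel_equiv (frel_comp H' (G_map dX (@fst X Y))) F1 ->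
  frel_equiv (frel_comp H' (G_map dY (@snd X Y))) F2 ->
  sqle (fun t : Z * (X * Y) * (X * Y) => Num.max (H t.1.1 t.1.2) (H' t.1.1 t.2))
       (fun t : Z * (X * Y) * (X * Y) => prod_metric dX dY t.2 t.1.2).
Proof.
move=> vH vH' e1 e2 e1' e2'.
have [_ [_ [_ [fun1 _]]]] := fr1; have [_ [_ [_ [fun2 _]]]] := fr2.
pose T := (Z * (X * Y) * (X * Y))%type.
have onH : sqle (fun t : T => Num.max (H t.1.1 t.1.2) (H' t.1.1 t.2))
                (fun t : T => H t.1.1 t.1.2).
  by apply: sqle_pointwise => t; rewrite le_max lexx.
have onH' : sqle (fun t : T => Num.max (H t.1.1 t.1.2) (H' t.1.1 t.2))
                 (fun t : T => H' t.1.1 t.2).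
  by apply: sqle_pointwise => t; rewrite le_max lexx orbT.
have H_p := sqle_precomp (fun t : T => t.1) (comp_graph_factor mX vH e1).
have H_q := sqle_precomp (fun t : T => t.1) (comp_graph_factor mY vH e2).
have H'_p := sqle_precomp (fun t : T => (t.1.1, t.2)) (comp_graph_factor mX vH' e1').
have H'_q := sqle_precomp (fun t : T => (t.1.1, t.2)) (comp_graph_factor mY vH' e2').
rewrite /prod_metric; apply: sqle_max.
  apply: sqle_trans (sqle_precomp (fun t : T => (t.1.1, t.2.1, t.1.2.1)) fun1).
  by apply: sqle_max; [exact: sqle_trans onH' H'_p | exact: sqle_trans onH H_p].
apply: sqle_trans (sqle_precomp (fun t : T => (t.1.1, t.2.2, t.1.2.2)) fun2).
by apply: sqle_max; [exact: sqle_trans onH' H'_q | exact: sqle_trans onH H_q].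
Qed.

(* Uniqueness of the mediating morphism: pick a witness q of H'(z, ·) and
   transport it to p, whose distance to q is small by [factor_dist]. *)
Lemma pairing_unique (H H' : Z -> X * Y -> R) :
  is_funrel Rz (prod_metric dX dY) H -> is_funrel Rz (prod_metric dX dY) H' ->
  frel_equiv (frel_comp H (G_map dX (@fst X Y))) F1 ->
  frel_equiv (frel_comp H (G_map dY (@snd X Y))) F2 ->
  frel_equiv (frel_comp H' (G_map dX (@fst X Y))) F1 ->
  frel_equiv (frel_comp H' (G_map dY (@snd X Y))) F2 ->
  frel_equiv H H'.
Proof.
move=> frH frH' e1 e2 e1' e2'; rewrite /frel_equiv.
have witness : approx_total (fun t : Z * (X * Y) => H t.1 t.2)
                            (fun t : Z * (X * Y) => H' t.1).
  exact: total_sqle (funrel_dom frH) (total_precomp fst (funrel_total frH')).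
apply: (sqle_of_total witness) => /=.
apply: sqle_trans (sqle_precomp (fun t : Z * (X * Y) * (X * Y) => (t.1.1, t.2, t.1.2))
                                (funrel_transport frH')) => /=.
apply: sqle_max; first by apply: sqle_pointwise => t; rewrite le_max lexx orbT.
exact: factor_dist frH.1 frH'.1 e1 e2 e1' e2'.
Qed.

End ProductMetric.

Section Terminal.
Variable R : realType.

Lemma unit_metric_per : is_per (@unit_metric R).
Proof.
split; first by move=> x y; rewrite /unit_metric lexx ler01.
by split; apply: sqle_pointwise => t; rewrite /unit_metric ?maxxx.
Qed.

Lemma to_unit_funrel (Z : Type) (Rz : Z -> Z -> R) :
  is_per Rz -> is_funrel Rz (@unit_metric R) (fun z _ => Rz z z).
Proof.
move=> Rzp; have v0 x y : 0 <= Rz x y by case/andP: (Rzp.1 x y).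
split; first by move=> z _; exact: Rzp.1.
split; first by apply: sqle_pointwise => p; rewrite /unit_metric ge_max lexx v0.
split.
  apply: sqle_trans (sqle_precomp (fun t : Z * unit * Z * unit => (t.1.1.1, t.1.2))
                                  (per_diag_r Rzp)).
  by apply: sqle_pointwise => t; rewrite /unit_metric /= !le_max lexx !orbT.
split; first by apply: sqle_pointwise => t; rewrite /unit_metric le_max v0.
by apply: sqle_pointwise => z; apply: inf01_le tt _ => _; exact: v0.
Qed.

Lemma to_unit_unique (Z : Type) (Rz : Z -> Z -> R) (F F' : Z -> unit -> R) :
  is_funrel Rz (@unit_metric R) F -> is_funrel Rz (@unit_metric R) F' ->
  frel_equiv F F'.
Proof.
move=> fr fr'; rewrite /frel_equiv.
apply: (sqle_of_total (total_sqle (funrel_dom fr)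
  (total_precomp fst (funrel_total fr')))).
by apply: sqle_pointwise => -[[z []] []]; rewrite le_max lexx orbT.
Qed.

End Terminal.

Theorem mainTheorem17 (R : realType) :
  (* G preserves the terminal object *)
  is_terminal_PER (@unit_metric R) /\
  (* G preserves binary products *)
  (forall (X Y : Type) (dX : X -> X -> R) (dY : Y -> Y -> R),
     cMet1 dX -> cMet1 dY ->
     is_product_PER (prod_metric dX dY) dX dY
       (G_map dX (@fst X Y)) (G_map dY (@snd X Y))).
Proof.
split.
  split; first exact: unit_metric_per.
  move=> Z Rz Rzp; split; first by exists (fun z _ => Rz z z); exact: to_unit_funrel.
  exact: to_unit_unique.
move=> X Y dX dY [mX _] [mY _].
split; first exact: metric_per (prod_metric_is_metric mX mY).
split; first exact: fst_funrel.
split; first exact: snd_funrel.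
move=> Z Rz _ F1 F2 fr1 fr2; split.
  exists (pairing F1 F2); split; first exact: pairing_funrel.
  by split; [exact: (pairing_fst F2 fr1) | exact: (pairing_snd F1 fr2)].
exact: pairing_unique.
Qed.
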